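(* Let $c$ be a nontrivial prismatic 5-circuit in a compact right-angled hyperbolic polyhedron $P$, crossing edges $e_1,\dots,e_5$ and faces $F_1,\dots,F_5$ (indices mod 5). Then there is no $i$ such that $F_i$ and $F_{i+1}$ both contain a flat of $c$ lying on the same side of $c$.
   Context: A compact right-angled hyperbolic polyhedron is a nonempty compact convex intersection of finitely many closed half-spaces of $\mathbb{H}^3$ all of whose dihedral angles equal $\pi/2$. It has trivalent 1-skeleton and no prismatic 3- or 4-circuits, and every face has at least 5 edges. A $k$-circuit is a simple closed curve on $\partial P$ meeting the 1-skeleton transversely, in interior points of exactly $k$ distinct edges; it is prismatic if the $2k$ endpoints of these edges are pairwise distinct. For a prismatic 5-circuit $c$ crossing edges $e_1,\dots,e_5$ in cyclic order, $F_i$ denotes the face containing both $e_i$ and $e_{i+1}$. The circuit $c$ is trivial if there is a pentagonal face such that each $e_i$ has exactly one endpoint on it, and nontrivial otherwise. An edge $d$ of some $F_i$ is a flat of $c$ if, on one side of $c$, the part of $F_i$ cut off by the arc $c\cap F_i$ is a combinatorial quadrilateral whose side opposite to that arc is $d$. The flat then lies on that side of $c$. *)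

(* Combinatorial model of the boundary of a compact
   right-angled hyperbolic polyhedron as a (planar, cubic, polyhedral)
   combinatorial map on a finite set of darts D:
     a : D -> D   edge involution (a x is the other half of the edge of x),
     s : D -> D   vertex rotation (s permutes the 3 darts at a vertex),
     phi := s \o a  face permutation (orbits = faces). *)
From mathcomp Require Import all_boot.
Set Implicit Arguments.
Unset Strict Implicit.
Unset Printing Implicit Defensive.

Section CMap.
Variables (D : finType) (a s : D -> D).

Definition phi (x : D) : D := s (a x).

Definition vertex_of (x : D) : {set D} := [set y | fconnect s x y].
Definition edge_of (x : D) : {set D} := [set x; a x].
Definition face_of (x : D) : {set D} := [set y | fconnect phi x y].

Definition is_edge (E : {set D}) : Prop := exists x, E = edge_of x.
Definition is_face (G : {set D}) : Prop := exists x, G = face_of x.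

Definition edge_on_face (E G : {set D}) : bool := E :&: G != set0.
Definition vertex_on_face (x : D) (G : {set D}) : bool := vertex_of x :&: G != set0.

Definition nV : nat := #|[set vertex_of x | x : D]|.
Definition nE : nat := #|[set edge_of x | x : D]|.
Definition nF : nat := #|[set face_of x | x : D]|.

Definition circuit (k : nat) (e F : 'I_k -> {set D}) : Prop :=
  [/\ forall i, is_edge (e i),
      forall i, is_face (F i),
      injective e,
      injective F &
      forall i, edge_on_face (e i) (F i) /\ edge_on_face (e (ordS i)) (F i)].

(* prismatic: the 2k endpoints of the crossed edges are pairwise distinct,
   i.e. distinct darts of the crossed edges sit at distinct vertices *)
Definition prismatic (k : nat) (e F : 'I_k -> {set D}) : Prop :=
  circuit e F /\
  forall (i j : 'I_k) (x y : D), x \in e i -> y \in e j -> fconnect s x y -> x = y.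

Definition trivial_circuit (k : nat) (e : 'I_k -> {set D}) : Prop :=
  exists G : {set D}, [/\ is_face G, #|G| = 5 &
    forall i, #|[set x in e i | vertex_on_face x G]| = 1].

(* d is a flat of the circuit in the face F i: d is an edge of F i, and the
   part of F i cut off by the arc (on one side) is a quadrilateral whose side
   opposite to the arc is d, i.e. d joins an endpoint of e i to an endpoint
   of e (i+1) *)
Definition flat (k : nat) (e F : 'I_k -> {set D}) (i : 'I_k) (d : {set D}) : Prop :=
  [/\ is_edge d, edge_on_face d (F i), d != e i, d != e (ordS i) &
      exists x y z, [/\ d = edge_of x, y \in e i, z \in e (ordS i),
                        fconnect s x y & fconnect s (a x) z]].

(* moves in the 1-skeleton that do not cross the circuit: turning around a
   vertex, or traversing an edge that is not crossed *)
Definition off_circuit (k : nat) (e : 'I_k -> {set D}) : rel D :=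
  fun x y => (y == s x) || ((y == a x) && [forall j, x \notin e j]).

(* two edges (not crossed by the circuit) lie on the same side of it:
   they are joined by a path of the 1-skeleton not crossing the circuit *)
Definition same_side (k : nat) (e : 'I_k -> {set D}) (d d' : {set D}) : Prop :=
  exists x y, [/\ x \in d, y \in d' & connect (off_circuit e) x y].

(* combinatorial type of a compact right-angled hyperbolic polyhedron:
   a connected planar (Euler characteristic 2) trivalent polyhedral map
   (faces are simple cycles, each edge lies on two distinct faces, two faces
   share at most one edge), with no prismatic 3- or 4-circuits and all faces
   with at least 5 edges (Pogorelov / Andreev). *)
Record rah_polyhedron : Prop := {
  rah_a_inv : forall x, a (a x) = x;
  rah_a_fpf : forall x, a x != x;
  rah_s_cube : forall x, s (s (s x)) = x;
  rah_s_fpf : forall x, s x != x;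
  rah_conn : forall x y, connect (fun u v => (v == a u) || (v == s u)) x y;
  rah_euler : nV + nF = nE + 2;
  rah_face_simple : forall x y, y \in face_of x -> y \in vertex_of x -> x = y;
  rah_edge_two_faces : forall x, a x \notin face_of x;
  rah_faces_meet : forall x y, y \in face_of x -> a y \in face_of (a x) -> x = y;
  rah_face5 : forall x, 5 <= #|face_of x|;
  rah_no_prism3 : forall e F : 'I_3 -> {set D}, ~ prismatic e F;
  rah_no_prism4 : forall e F : 'I_4 -> {set D}, ~ prismatic e F
}.

End CMap.

(* Over F_2, the vector of crossed edges is orthogonal to every
      face boundary (each face contains 0 or 2 crossed edges).  By Euler's
      formula the coboundaries of vertex functions are exactly these vectors,
      so there is a "side" function tau on vertices that flips exactly across
      crossed edges.  Hence two flats on the same side of c, lying in F_i and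
      F_(i+1), end at the same endpoint v of e_(i+1).
   2. Local geometry.  Around a vertex there are three faces and three edges;
      the absence of prismatic 3- and 4-circuits says that three pairwise
      adjacent faces share a vertex, and that four cyclically adjacent faces
      have three consecutive ones sharing a vertex.
   3. The pentagon.  The two flats lie on the third face G at v.  Using 2.,
      the boundary of G is a closed path of five edges meeting the crossed
      edges e_i, .., e_(i+4) in one endpoint each; a face containing such a
      cycle has exactly those vertices, so G is a pentagon witnessing that c
      is trivial -- a contradiction. *)
From mathcomp Require Import all_boot all_algebra zify.
Set Implicit Arguments.
Unset Strict Implicit.
Unset Printing Implicit Defensive.
Import GRing.Theory.

Lemma connect_invariant (T : finType) (r : rel T) (U : Type) (g : T -> U) :
  (forall u v, r u v -> g u = g v) -> forall x y, connect r x y -> g x = g y.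
Proof.
move=> gr x y /connectP [q rq ->]; elim: q x rq => //= z q IHq x /andP [rxz rq].
by rewrite (gr _ _ rxz); exact: IHq.
Qed.

Lemma fconnect_stable (T : finType) (f : T -> T) (P : pred T) x y :
  P x -> (forall z, P z -> P (f z)) -> fconnect f x y -> P y.
Proof.
move=> Px Pf /connectP [q fq ->]; elim: q x Px fq => //= z q IHq x Px /andP [/eqP <- fq].
exact: IHq (Pf _ Px) fq.
Qed.

Lemma F2_add_eq0 (x y : 'F_2) : (x + y = 0)%R -> x = y.
Proof.
move/eqP; rewrite addr_eq0 => /eqP ->.
exact: (oppr_pchar2 (pchar_Fp (isT : prime 2))).
Qed.

Lemma F2_natr_double n : ((n.*2)%:R : 'F_2)%R = 0%R.
Proof.
have /andP [_ /eqP two0] := pchar_Fp (isT : prime 2).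
by rewrite -muln2 natrM two0 mulr0.
Qed.

Lemma pair_indicator (T : eqType) (x1 x2 y1 y2 f : T) :
  x1 != x2 -> y1 != y2 -> (y1 == x1) || (y1 == x2) -> (y2 == x1) || (y2 == x2) ->
  (f == x1) + (f == x2) = (f == y1) + (f == y2).
Proof.
move=> n12 m12 /orP [] /eqP ? /orP [] /eqP ?; subst; rewrite ?eqxx // in m12.
by rewrite addnC.
Qed.

Lemma ordS_neq k (i : 'I_k) : 1 < k -> ordS i != i.
Proof.
move=> k_gt1; apply/eqP => /(congr1 val) /=; case: (ltnP i.+1 k) => [lt_ik|ge_ik].
  by rewrite modn_small // => /eqP; rewrite (gtn_eqF (ltnSn i)).
have ik : i.+1 = k by apply/eqP; rewrite eqn_leq ltn_ord.
by rewrite ik modnn => i0; move: k_gt1; rewrite -ik -i0.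
Qed.

Lemma ordS2_neq k (i : 'I_k) : 2 < k -> ordS (ordS i) != i.
Proof.
move=> k_gt2; apply/eqP => /(congr1 val) /=.
rewrite -addn1 modnDml addn1 -addn2; case: (ltnP (i + 2) k) => [small|big].
  by rewrite modn_small //; lia.
have ltik := ltn_ord i.
rewrite -(subnK big) modnDr modn_small; lia.
Qed.

Lemma ord_pred_neq_ordS k (i : 'I_k) : 2 < k -> ord_pred i != ordS i.
Proof.
move=> k_gt2; apply/eqP => Ei.
by have := ordS2_neq i k_gt2; rewrite -Ei ord_predK eqxx.
Qed.

(* Incidence over F_2 between the orbits of a permutation p and the "edges"
   {x, a x} of an involution a.  When the graph they generate is connected,
   the left kernel of this incidence matrix is spanned by the all-one row,
   so the number of orbits is at most its rank plus one. *)
Section OrbitIncidence.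
Variables (D : finType) (a p : D -> D).
Hypothesis pinj : injective p.

Definition orbit_of x : {set D} := [set y | fconnect p x y].
Definition orbits : {set {set D}} := [set orbit_of x | x : D].
Definition edges : {set {set D}} := [set [set x; a x] | x : D].

Lemma orbit_ofP x y : orbit_of x = orbit_of y <-> fconnect p x y.
Proof.
split=> [Exy|pxy].
  have: y \in orbit_of y by rewrite inE connect0.
  by rewrite -Exy inE.
by apply/setP=> z; rewrite !inE; exact: (same_connect (fconnect_sym pinj) pxy).
Qed.

Lemma mem_orbits x : orbit_of x \in orbits. Proof. exact: imset_f. Qed.
Lemma mem_edges x : [set x; a x] \in edges. Proof. exact: imset_f. Qed.

Definition oidx x : 'I_#|orbits| := enum_rank_in (mem_orbits x) (orbit_of x).
Definition eidx x : 'I_#|edges| := enum_rank_in (mem_edges x) [set x; a x].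

Lemma oidxK x : enum_val (oidx x) = orbit_of x.
Proof. exact: (enum_rankK_in (mem_orbits x) (mem_orbits x)). Qed.
Lemma eidxK x : enum_val (eidx x) = [set x; a x].
Proof. exact: (enum_rankK_in (mem_edges x) (mem_edges x)). Qed.

Lemma eq_oidx x y : (oidx x == oidx y) = fconnect p x y.
Proof.
apply/eqP/idP => [Exy|pxy]; first by apply/orbit_ofP; rewrite -!oidxK Exy.
by apply: enum_val_inj; rewrite !oidxK; apply/orbit_ofP.
Qed.

Lemma oidx_surj (i : 'I_#|orbits|) : exists x, i = oidx x.
Proof.
have /imsetP [x _ Ei] := enum_valP i; exists x.
by apply: enum_val_inj; rewrite oidxK.
Qed.

Definition incidence : 'M['F_2]_(#|orbits|, #|edges|) :=
  \matrix_(i, j) ((enum_val j :&: enum_val i != set0)%:R)%R.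

Lemma incidenceE i x :
  incidence i (eidx x) = ((i == oidx x) || (i == oidx (a x)))%:R%R.
Proof.
have [y ->] := oidx_surj i; rewrite mxE oidxK eidxK !eq_oidx.
rewrite !(fconnect_sym pinj y); congr ((nat_of_bool _)%:R)%R.
apply/set0Pn/orP => [[z]|[pxy|pay]].
- rewrite !inE (fconnect_sym pinj) => /andP [/orP [] /eqP -> pzy].
    by left.
  by right.
- by exists x; rewrite !inE eqxx (fconnect_sym pinj).
by exists (a x); rewrite !inE eqxx orbT (fconnect_sym pinj).
Qed.

Lemma coboundaryE (u : 'rV['F_2]_#|orbits|) x :
  ((u *m incidence) ord0 (eidx x) =
   if oidx x == oidx (a x) then u ord0 (oidx x)
   else u ord0 (oidx x) + u ord0 (oidx (a x)))%R.
Proof.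
rewrite mxE (bigD1 (oidx x)) //= incidenceE eqxx /= mulr1.
case: eqP => [xax|nxax].
  rewrite big1 ?addr0 // => i /negbTE ni.
  by rewrite incidenceE -xax ni /= mulr0.
rewrite (bigD1 (oidx (a x))) /=; last by apply/eqP => axx; apply: nxax.
rewrite incidenceE eqxx orbT mulr1 big1 ?addr0 // => i /andP [/negbTE ni /negbTE nai].
by rewrite incidenceE ni nai mulr0.
Qed.

Hypothesis conn : forall x y, connect (fun u v => (v == a u) || (v == p u)) x y.

Lemma left_kernel_incidence (r : 'rV['F_2]_#|orbits|) :
  (r *m incidence = 0)%R -> (r <= (const_mx 1%R : 'rV['F_2]_#|orbits|))%MS.
Proof.
move=> r0.
have r_const x y : r ord0 (oidx x) = r ord0 (oidx y).
  apply: (connect_invariant (g := fun z => r ord0 (oidx z))) (conn x y).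
  move=> u v /orP [] /eqP ->.
    have := coboundaryE r u; rewrite r0 mxE.
    by case: eqP => [->|_] // /esym /F2_add_eq0.
  by congr (r ord0 _); apply/eqP; rewrite eq_oidx fconnect1.
case: (pickP (fun _ : D => true)) => [x0 _ | D0].
  have -> : r = (r ord0 (oidx x0) *: const_mx 1)%R.
    apply/rowP => i; have [y ->] := oidx_surj i.
    by rewrite !mxE mulr1 (r_const y x0).
  exact/scalemx_sub/submx_refl.
have -> : r = 0%R by apply/rowP => i; have [y _] := oidx_surj i; have := D0 y.
exact: sub0mx.
Qed.

Lemma orbits_le_rank : #|orbits| <= (\rank incidence).+1.
Proof.
have kerS : (kermx incidence <= (const_mx 1%R : 'rV['F_2]_#|orbits|))%MS.
  apply/row_subP => k; apply: left_kernel_incidence.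
  by rewrite -row_mul mulmx_ker row0.
have := leq_trans (mxrankS kerS) (rank_leq_row _).
by rewrite mxrank_ker leq_subLR addn1.
Qed.

End OrbitIncidence.

Section Polyhedron.
Variables (D : finType) (a s : D -> D).
Hypothesis rah : rah_polyhedron a s.

Local Notation ph := (phi a s).
Local Notation E := (edge_of a).
Local Notation V := (vertex_of s).
Local Notation Fc := (face_of a s).

Lemma aK : involutive a. Proof. exact: rah_a_inv rah. Qed.
Lemma s3 x : s (s (s x)) = x. Proof. exact: rah_s_cube rah x. Qed.
Lemma sinj : injective s. Proof. exact: (can_inj (g := s \o s)) s3. Qed.
Lemma phinj : injective ph. Proof. by move=> x y /sinj /(can_inj aK). Qed.
Lemma s_neq x : s x != x. Proof. exact: rah_s_fpf rah x. Qed.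
Lemma a_neq x : a x != x. Proof. exact: rah_a_fpf rah x. Qed.

Lemma fconnect_sE x y : fconnect s x y = [|| y == x, y == s x | y == s (s x)].
Proof.
apply/idP/idP => [sxy|/or3P [] /eqP ->].
- apply: (fconnect_stable (P := fun z => [|| z == x, z == s x | z == s (s x)]) _ _ sxy).
    by rewrite eqxx.
  by move=> z /or3P [] /eqP ->; rewrite ?eqxx ?orbT // s3 eqxx.
- exact: connect0.
- exact: fconnect1.
exact: connect_trans (fconnect1 _ _) (fconnect1 _ _).
Qed.

Lemma fconnect_s_sym x y : fconnect s x y = fconnect s y x.
Proof. exact: fconnect_sym sinj x y. Qed.
Lemma fconnect_phi_sym x y : fconnect ph x y = fconnect ph y x.
Proof. exact: fconnect_sym phinj x y. Qed.

Lemma faceP x y : Fc x = Fc y <-> fconnect ph x y.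
Proof. exact: (orbit_ofP phinj). Qed.
Lemma vertexP x y : V x = V y <-> fconnect s x y.
Proof. exact: (orbit_ofP sinj). Qed.

Lemma mem_face x y : (y \in Fc x) = (Fc x == Fc y).
Proof. by rewrite inE; apply/idP/eqP => /faceP. Qed.

Lemma face_phi x : Fc (ph x) = Fc x.
Proof. by apply/faceP; rewrite fconnect_phi_sym fconnect1. Qed.

Lemma face_a x : Fc (a x) = Fc (s x).
Proof. by rewrite -face_phi /phi aK. Qed.

Lemma face_s_neq x : Fc x != Fc (s x).
Proof.
rewrite -face_a; apply/eqP => Ex.
by have := rah_edge_two_faces rah x; rewrite mem_face Ex eqxx.
Qed.

Lemma mem_edge x y : (y \in E x) = (y == x) || (y == a x).
Proof. by rewrite !inE. Qed.

Lemma edge_a x : E (a x) = E x.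
Proof. by rewrite /edge_of aK setUC. Qed.

Lemma edge_mem x y : y \in E x -> E y = E x.
Proof. by rewrite mem_edge => /orP [] /eqP ->; rewrite ?edge_a. Qed.

Lemma edge_on_faceE x y :
  edge_on_face (E x) (Fc y) = (Fc y == Fc x) || (Fc y == Fc (s x)).
Proof.
rewrite -face_a; apply/set0Pn/idP => [[z]|/orP [] /eqP ->].
- rewrite !inE => /andP [/orP [] /eqP -> /faceP ->]; by rewrite eqxx ?orbT.
- by exists x; rewrite !inE eqxx /=; apply: connect0.
by exists (a x); rewrite !inE eqxx orbT /=; apply: connect0.
Qed.

Lemma phi_neq x : ph (s x) != s x.
Proof.
apply/eqP => fix_sx.
have : Fc (s x) \subset [set s x].
  apply/subsetP => y; rewrite !inE; apply: (fconnect_stable (P := pred1 (s x))) => //=.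
  by move=> z /eqP ->; rewrite fix_sx.
by move/subset_leq_card; rewrite cards1 => /(leq_trans (rah_face5 rah (s x))).
Qed.

Lemma edge_s_neq x : E (s x) != E x.
Proof.
apply/eqP => Ex.
have : s x \in E x by rewrite -Ex !inE eqxx.
rewrite mem_edge (negbTE (s_neq x)) /= => /eqP sx.
by have := phi_neq x; rewrite /phi {1}sx aK eqxx.
Qed.

Lemma edge_ss_neq x : E (s (s x)) != E x.
Proof. by rewrite eq_sym -{1}(s3 x) edge_s_neq. Qed.

Lemma edge_no_loop x : ~~ fconnect s x (a x).
Proof.
rewrite fconnect_sE (negbTE (a_neq x)) /=; apply/negP => /orP [] /eqP ax.
  by have := phi_neq x; rewrite /phi -ax aK ax eqxx.
by have := phi_neq (s (s x)); rewrite /phi s3 ax s3 eqxx.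
Qed.

Lemma conn_phi x y : connect (fun u v => (v == a u) || (v == ph u)) x y.
Proof.
apply: (connect_sub (e := fun u v => (v == a u) || (v == s u))); last exact: (rah_conn rah).
move=> u v /orP [] /eqP ->; first by apply: connect1; rewrite eqxx.
apply: (connect_trans (y := a u)); apply: connect1; first by rewrite eqxx.
by rewrite /phi aK eqxx orbT.
Qed.


Definition at_vertex (ep : {set D}) t : bool := ep :&: V t != set0.

Lemma at_vertexE z x :
  at_vertex (E z) x = [|| E z == E x, E z == E (s x) | E z == E (s (s x))].
Proof.
apply/set0Pn/idP => [[w]|].
  rewrite in_setI => /andP [zw]; rewrite inE fconnect_sE -(edge_mem zw).
  by case/or3P => /eqP ->; rewrite eqxx ?orbT.
case/or3P => /eqP ->.
- by exists x; rewrite in_setI !inE eqxx /= connect0.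
- by exists (s x); rewrite in_setI !inE eqxx /= fconnect1.
by exists (s (s x)); rewrite in_setI !inE eqxx /= fconnect_sE eqxx !orbT.
Qed.

Lemma sum_pick (c : {set D}) (K : nat) :
  c \in edges a -> \sum_(e0 in edges a) ((e0 == c) * K) = K.
Proof.
move=> Ec; rewrite (bigD1 c) //= eqxx mul1n big1 ?addn0 // => e0 /andP [_ /negbTE ->].
by rewrite mul0n.
Qed.

Lemma edge_on_face_nat x y :
  (edge_on_face (E x) (Fc y) : nat) = (Fc y == Fc x) + (Fc y == Fc (s x)).
Proof.
rewrite edge_on_faceE; case: eqP => [->|] //=.
by rewrite (negbTE (face_s_neq x)).
Qed.

(* A vertex and a face share an even number (0 or 2) of edges. *)
Lemma vertex_face_incidence_even : (incidence a s *m (incidence a ph)^T = 0)%R.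
Proof.
apply/matrixP => i k; rewrite !mxE.
have [x ->] := oidx_surj i; have [y ->] := oidx_surj k.
transitivity (\sum_(j < #|edges a|)
   ((((enum_val j :&: V x != set0) && (enum_val j :&: Fc y != set0)) : nat)%:R : 'F_2))%R.
  by apply: eq_bigr => j _; rewrite /incidence !mxE !oidxK -natrM mulnb.
rewrite -natr_sum.
rewrite -(big_enum_val (fun e0 => (((e0 :&: V x != set0) && (e0 :&: Fc y != set0)) : nat))).
have -> : \sum_(e0 in edges a) (((e0 :&: V x != set0) && (e0 :&: Fc y != set0)) : nat)
   = \sum_(e0 in edges a) ((e0 == E x) * edge_on_face (E x) (Fc y)
                         + (e0 == E (s x)) * edge_on_face (E (s x)) (Fc y)
                         + (e0 == E (s (s x))) * edge_on_face (E (s (s x))) (Fc y)).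
  apply: eq_bigr => e0 /imsetP [z _ ->].
  rewrite -[[set z; a z]]/(E z) -/(at_vertex (E z) x) at_vertexE.
  case: (eqVneq (E z) (E x)) => [->|n1].
    rewrite [E x == E (s x)]eq_sym [E x == E (s (s x))]eq_sym.
    by rewrite (negbTE (edge_s_neq x)) (negbTE (edge_ss_neq x)) /= mul1n !mul0n !addn0.
  case: (eqVneq (E z) (E (s x))) => [->|n2].
    by rewrite eq_sym (negbTE (edge_s_neq (s x))) mul1n !mul0n add0n addn0.
  by case: (eqVneq (E z) (E (s (s x)))) => [->|n3] /=; rewrite !mul0n ?mul1n.
rewrite big_split big_split /= !sum_pick ?mem_edges // !edge_on_face_nat s3.
have cycle_sum (b1 b2 b3 : bool) : b1 + b2 + (b2 + b3) + (b3 + b1) = (b1 + b2 + b3).*2.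
  by case: b1; case: b2; case: b3.
by rewrite cycle_sum F2_natr_double.
Qed.

Section Sides.
Variables (k : nat) (e Fa : 'I_k -> {set D}).
Hypothesis k_gt1 : 1 < k.
Hypothesis circ : circuit a s e Fa.

Lemma crossed_edge i : exists z, e i = E z.
Proof. by case: circ => He _ _ _ _; case: (He i) => z ->; exists z. Qed.
Lemma circuit_face i : exists z, Fa i = Fc z.
Proof. by case: circ => _ HF _ _ _; case: (HF i) => z ->; exists z. Qed.
Lemma crossed_inj : injective e. Proof. by case: circ. Qed.
Lemma circuit_face_inj : injective Fa. Proof. by case: circ. Qed.
Lemma crossed_on_face i : edge_on_face (e i) (Fa i).
Proof. by case: circ => _ _ _ _ /(_ i) []. Qed.
Lemma next_crossed_on_face i : edge_on_face (e (ordS i)) (Fa i).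
Proof. by case: circ => _ _ _ _ /(_ i) []. Qed.

Definition crossed : {set {set D}} := [set e i | i : 'I_k].

Definition crossing_vector : 'rV['F_2]_#|edges a| :=
  \row_j (((enum_val j \in crossed) : nat)%:R)%R.

Lemma crossing_vectorE x :
  crossing_vector ord0 (eidx a x) = (([exists j, x \in e j] : nat)%:R)%R.
Proof.
rewrite /crossing_vector mxE eidxK; congr ((nat_of_bool _)%:R)%R.
apply/imsetP/existsP => [[j _ Ej]|[j xj]]; first by exists j; rewrite -Ej !inE eqxx.
exists j => //; have [z Ez] := crossed_edge j; rewrite Ez in xj *; exact: edge_mem xj.
Qed.

(* each face contains an even number of crossed edges *)
Lemma circuit_face_even : (crossing_vector *m (incidence a ph)^T = 0)%R.
Proof.
apply/rowP => kk; rewrite !mxE.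
have [y ->] := oidx_surj kk.
transitivity (\sum_(j < #|edges a|)
   ((((enum_val j \in crossed) && (enum_val j :&: Fc y != set0)) : nat)%:R : 'F_2))%R.
  by apply: eq_bigr => j _; rewrite /incidence /crossing_vector !mxE !oidxK -natrM mulnb.
rewrite -natr_sum.
rewrite -(big_enum_val (fun e0 => (((e0 \in crossed) && (e0 :&: Fc y != set0)) : nat))).
have -> : \sum_(e0 in edges a) (((e0 \in crossed) && (e0 :&: Fc y != set0)) : nat)
   = \sum_(e0 in crossed) ((e0 :&: Fc y != set0) : nat).
  rewrite big_mkcond [RHS]big_mkcond; apply: eq_bigr => e0 _.
  case: (boolP (e0 \in crossed)) => [/imsetP [i _ ->]|] /=; last by case: ifP.
  by have [z ->] := crossed_edge i; rewrite mem_edges.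
rewrite big_imset /=; last by move=> i j _ _; apply: crossed_inj.
rewrite (eq_bigl xpredT) // (reindex_inj (@ordS_inj k)) /=.
have -> : \sum_(i < k) ((e (ordS i) :&: Fc y != set0) : nat)
     = \sum_(i < k) ((Fc y == Fa i) + (Fc y == Fa (ordS i))).
  apply: eq_bigr => i _.
  have [z Ez] := crossed_edge (ordS i).
  have := edge_on_face_nat z y; rewrite /edge_on_face -Ez => ->.
  have [w1 Fw1] := circuit_face i; have [w2 Fw2] := circuit_face (ordS i).
  apply: pair_indicator; first exact: face_s_neq.
  - by apply/negP => /eqP /circuit_face_inj /eqP; rewrite eq_sym (negbTE (ordS_neq i k_gt1)).
  - by have := next_crossed_on_face i; rewrite Ez Fw1 edge_on_faceE -Fw1.
  by have := crossed_on_face (ordS i); rewrite Ez Fw2 edge_on_faceE -Fw2.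
have shift : \sum_(i < k) ((Fc y == Fa (ordS i)) : nat) = \sum_(i < k) ((Fc y == Fa i) : nat).
  by rewrite [RHS](reindex_inj (@ordS_inj k)).
by rewrite big_split /= shift addnn F2_natr_double.
Qed.

(* Euler's formula: the cycles orthogonal to all faces are coboundaries *)
Lemma crossing_coboundary : (crossing_vector <= incidence a s)%MS.
Proof.
have rF := orbits_le_rank phinj conn_phi.
have rV := orbits_le_rank sinj (rah_conn rah).
have euler : #|orbits s| + #|orbits ph| = #|edges a| + 2 := rah_euler rah.
have sK : (incidence a s <= kermx (incidence a ph)^T)%MS.
  by rewrite sub_kermx vertex_face_incidence_even.
have cK : (crossing_vector <= kermx (incidence a ph)^T)%MS.
  by rewrite sub_kermx circuit_face_even.
have rk : \rank (kermx (incidence a ph)^T) <= \rank (incidence a s).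
  rewrite mxrank_ker mxrank_tr leq_subLR.
  have h := leq_add rV rF; rewrite euler in h.
  have h2 : #|edges a| + 2 <= \rank (incidence a s) + \rank (incidence a ph) + 2.
    by apply: (leq_trans h); rewrite addSn addnS addn2.
  by rewrite leq_add2r addnC in h2.
have eq_rk : \rank (incidence a s) == \rank (kermx (incidence a ph)^T).
  by rewrite eqn_leq rk (mxrankS sK).
move: eq_rk; rewrite (mxrank_leqif_sup sK).2 => kV.
exact: submx_trans cK kV.
Qed.

Lemma side_function : exists tau : D -> 'F_2,
  [/\ forall x, tau (s x) = tau x,
      forall x, (forall j, x \notin e j) -> tau (a x) = tau x &
      forall j x, x \in e j -> tau (a x) != tau x].
Proof.
have /submxP [sg Esg] := crossing_coboundary.
exists (fun x => sg ord0 (oidx s x)); split.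
- by move=> x; congr (sg ord0 _); apply/eqP; rewrite (eq_oidx sinj) fconnect_s_sym fconnect1.
- move=> x xn.
  have := coboundaryE a sinj sg x; rewrite -Esg crossing_vectorE.
  have -> : [exists j, x \in e j] = false.
    by apply/existsP => [[j xj]]; have := xn j; rewrite xj.
  by case: eqP => [->|_] //= /esym /F2_add_eq0.
move=> j x xj.
have := coboundaryE a sinj sg x; rewrite -Esg crossing_vectorE.
have -> : [exists j, x \in e j] = true by apply/existsP; exists j.
rewrite (eq_oidx sinj) (negbTE (edge_no_loop x)) => flip; apply/eqP => Ex; move: flip.
rewrite Ex (addrr_pchar2 (pchar_Fp (isT : prime 2))).
by move/eqP; rewrite /= oner_eq0.
Qed.

Lemma same_side_function (tau : D -> 'F_2) d d' :
  (forall x, tau (s x) = tau x) -> (forall x, (forall j, x \notin e j) -> tau (a x) = tau x) ->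
  same_side a s e d d' -> exists p q, [/\ p \in d, q \in d' & tau p = tau q].
Proof.
move=> tau_s tau_a [p [q [pd qd' pq]]]; exists p, q; split => //.
apply: (connect_invariant _ pq) => u v /orP [/eqP -> | /andP [/eqP -> /forallP un]].
  by rewrite tau_s.
by rewrite tau_a.
Qed.

End Sides.

Lemma at_vertexP (ep : {set D}) t : reflect (exists2 x, x \in ep & fconnect s t x) (at_vertex ep t).
Proof.
apply: (iffP (set0Pn _)) => [[x]|[x xe tx]].
  by rewrite in_setI inE => /andP [xe tx]; exists x.
by exists x; rewrite in_setI inE xe.
Qed.

Lemma vertex_on_faceP t (G : {set D}) :
  reflect (exists2 x, x \in G & fconnect s t x) (vertex_on_face s t G).
Proof.
apply: (iffP (set0Pn _)) => [[x]|[x xG tx]].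
  by rewrite in_setI inE => /andP [tx xG]; exists x.
by exists x; rewrite in_setI inE tx.
Qed.

Lemma at_vertex_conn ep t t' : fconnect s t t' -> at_vertex ep t = at_vertex ep t'.
Proof. by move/vertexP; rewrite /at_vertex => ->. Qed.

Lemma vertex_on_face_conn t t' G :
  fconnect s t t' -> vertex_on_face s t G = vertex_on_face s t' G.
Proof. by move/vertexP; rewrite /vertex_on_face => ->. Qed.

Lemma vertex_on_faceE t y :
  vertex_on_face s t (Fc y) = [|| Fc y == Fc t, Fc y == Fc (s t) | Fc y == Fc (s (s t))].
Proof.
apply/vertex_on_faceP/idP => [[z]|].
  rewrite mem_face fconnect_sE => /eqP -> /or3P [] /eqP ->; by rewrite eqxx ?orbT.
case/or3P => /eqP ->.
- by exists t; rewrite ?mem_face ?connect0.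
- by exists (s t); rewrite ?mem_face ?fconnect1.
by exists (s (s t)); rewrite ?mem_face // fconnect_sE eqxx !orbT.
Qed.

Lemma face_ss_neq t : Fc (s (s t)) != Fc t.
Proof. by rewrite -{2}(s3 t) face_s_neq. Qed.

Lemma edge_at_face y t w :
  at_vertex (E y) t -> edge_on_face (E y) (Fc w) -> vertex_on_face s t (Fc w).
Proof.
rewrite at_vertexE vertex_on_faceE; case/or3P => /eqP ->; rewrite edge_on_faceE ?s3;
  by case/orP => ->; rewrite ?orbT.
Qed.

Lemma at_most_two_faces y p q r :
  edge_on_face (E y) (Fc p) -> edge_on_face (E y) (Fc q) -> edge_on_face (E y) (Fc r) ->
  [|| Fc p == Fc q, Fc q == Fc r | Fc p == Fc r].
Proof.
rewrite !edge_on_faceE.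
by case/orP => /eqP ->; case/orP => /eqP ->; case/orP => /eqP ->; rewrite ?eqxx ?orbT.
Qed.

Lemma other_face_of_edge y p : edge_on_face (E y) (Fc p) ->
  exists q, Fc q != Fc p /\ edge_on_face (E y) (Fc q).
Proof.
rewrite edge_on_faceE => /orP [] /eqP ->.
  by exists (s y); rewrite eq_sym face_s_neq edge_on_faceE eqxx orbT.
by exists y; rewrite face_s_neq edge_on_faceE eqxx.
Qed.

Lemma at_most_three_faces t p q r w :
  Fc p != Fc q -> Fc q != Fc r -> Fc p != Fc r ->
  vertex_on_face s t (Fc p) -> vertex_on_face s t (Fc q) -> vertex_on_face s t (Fc r) ->
  vertex_on_face s t (Fc w) -> [|| Fc w == Fc p, Fc w == Fc q | Fc w == Fc r].
Proof.
rewrite !vertex_on_faceE => n1 n2 n3 P Q R W; move: n1 n2 n3.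
by case/or3P: P => /eqP ->; case/or3P: Q => /eqP ->; case/or3P: R => /eqP ->;
  case/or3P: W => /eqP ->; rewrite ?eqxx ?orbT.
Qed.

Lemma third_face t p q : Fc p != Fc q ->
  vertex_on_face s t (Fc p) -> vertex_on_face s t (Fc q) ->
  exists g, [/\ vertex_on_face s t (Fc g), Fc g != Fc p & Fc g != Fc q].
Proof.
have A0 : vertex_on_face s t (Fc t) by rewrite vertex_on_faceE eqxx.
have A1 : vertex_on_face s t (Fc (s t)) by rewrite vertex_on_faceE eqxx orbT.
have A2 : vertex_on_face s t (Fc (s (s t))) by rewrite vertex_on_faceE eqxx !orbT.
have n01 := face_s_neq t; have n12 := face_s_neq (s t); have n20 := face_ss_neq t.
have n10 : Fc (s t) != Fc t by rewrite eq_sym.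
have n21 : Fc (s (s t)) != Fc (s t) by rewrite eq_sym.
have n02 : Fc t != Fc (s (s t)) by rewrite eq_sym.
rewrite !vertex_on_faceE => + /or3P [] /eqP -> /or3P [] /eqP -> => npq;
  rewrite ?eqxx //= in npq;
  first [by exists t; split | by exists (s t); split | by exists (s (s t)); split].
Qed.

Lemma faces_share_one_edge y y' p q : Fc p != Fc q ->
  edge_on_face (E y) (Fc p) -> edge_on_face (E y) (Fc q) ->
  edge_on_face (E y') (Fc p) -> edge_on_face (E y') (Fc q) -> E y = E y'.
Proof.
have pick z r : edge_on_face (E z) (Fc r) -> exists x, [/\ E x = E z, Fc x = Fc r & x \in E z].
  case/set0Pn => x; rewrite in_setI => /andP [xz xr].
  by exists x; split => //; [exact: edge_mem | apply/esym/eqP; rewrite -mem_face].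
have other x r : edge_on_face (E x) (Fc r) -> Fc r != Fc x -> Fc r = Fc (a x).
  by rewrite edge_on_faceE face_a => /orP [] /eqP ->; rewrite ?eqxx.
move=> npq yp yq y'p y'q.
have [x [Ex Fx _]] := pick _ _ yp; have [x' [Ex' Fx' _]] := pick _ _ y'p.
rewrite -Ex in yq; rewrite -Ex' in y'q.
have Q1 := other _ _ yq; rewrite Fx eq_sym in Q1; have {}Q1 := Q1 npq.
have Q2 := other _ _ y'q; rewrite Fx' eq_sym in Q2; have {}Q2 := Q2 npq.
have := rah_faces_meet rah (x := x) (y := x').
rewrite mem_face Fx Fx' eqxx mem_face -Q1 -Q2 eqxx => /(_ isT isT) xx'.
by rewrite -Ex -Ex' xx'.
Qed.

Lemma common_edge_at t p q : Fc p != Fc q ->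
  vertex_on_face s t (Fc p) -> vertex_on_face s t (Fc q) ->
  exists y, [/\ at_vertex (E y) t, edge_on_face (E y) (Fc p) & edge_on_face (E y) (Fc q)].
Proof.
have A0 : at_vertex (E t) t by rewrite at_vertexE eqxx.
have A1 : at_vertex (E (s t)) t by rewrite at_vertexE eqxx orbT.
have A2 : at_vertex (E (s (s t))) t by rewrite at_vertexE eqxx !orbT.
rewrite !vertex_on_faceE => + /or3P [] /eqP -> /or3P [] /eqP -> => npq;
  rewrite ?eqxx //= in npq;
  first [by exists t; rewrite !edge_on_faceE ?s3 !eqxx ?orbT
        | by exists (s t); rewrite !edge_on_faceE ?s3 !eqxx ?orbT
        | by exists (s (s t)); rewrite !edge_on_faceE ?s3 !eqxx ?orbT].
Qed.

Lemma shared_edge_at t p q y : Fc p != Fc q ->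
  vertex_on_face s t (Fc p) -> vertex_on_face s t (Fc q) ->
  edge_on_face (E y) (Fc p) -> edge_on_face (E y) (Fc q) -> at_vertex (E y) t.
Proof.
move=> npq tp tq yp yq; have [y' [ty' y'p y'q]] := common_edge_at npq tp tq.
by rewrite (faces_share_one_edge npq yp yq y'p y'q).
Qed.

Lemma edge_on_third_face y p1 p2 p3 t :
  Fc p1 != Fc p2 -> Fc p2 != Fc p3 -> Fc p1 != Fc p3 ->
  vertex_on_face s t (Fc p1) -> vertex_on_face s t (Fc p2) -> vertex_on_face s t (Fc p3) ->
  at_vertex (E y) t -> edge_on_face (E y) (Fc p1) -> ~~ edge_on_face (E y) (Fc p2) ->
  edge_on_face (E y) (Fc p3).
Proof.
move=> n12 n23 n13 v1 v2 v3 ty y1 ny2.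
have [q [nq1 yq]] := other_face_of_edge y1.
have := at_most_three_faces n12 n23 n13 v1 v2 v3 (edge_at_face ty yq).
case/or3P => /eqP Eq; rewrite Eq in nq1 yq.
- by rewrite eqxx in nq1.
- by rewrite yq in ny2.
exact: yq.
Qed.

Lemma other_endpoint x t : at_vertex (E x) t -> ~~ fconnect s t x -> fconnect s t (a x).
Proof. by case/at_vertexP => y; rewrite mem_edge => /orP [] /eqP -> // ->. Qed.

Lemma edge_darts_apart x y z : x \in E z -> y \in E z -> fconnect s x y -> x = y.
Proof.
rewrite !mem_edge => /orP [] /eqP -> /orP [] /eqP -> //.
  by move=> zaz; have := edge_no_loop z; rewrite zaz.
by rewrite fconnect_s_sym => zaz; have := edge_no_loop z; rewrite zaz.
Qed.

Lemma edge_two_endpoints y t1 t2 t3 :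
  at_vertex (E y) t1 -> at_vertex (E y) t2 -> at_vertex (E y) t3 ->
  [|| fconnect s t1 t2, fconnect s t2 t3 | fconnect s t1 t3].
Proof.
move=> /at_vertexP [x1 x1y t1x] /at_vertexP [x2 x2y t2x] /at_vertexP [x3 x3y t3x].
have join u v x : fconnect s u x -> fconnect s v x -> fconnect s u v.
  by move=> ux vx; apply: connect_trans ux _; rewrite fconnect_s_sym.
move: x1y x2y x3y t1x t2x t3x; rewrite !mem_edge.
by do 3!case/orP => /eqP ->; move=> h1 h2 h3; rewrite ?(join _ _ _ h1 h2) ?(join _ _ _ h2 h3)
  ?(join _ _ _ h1 h3) ?orbT.
Qed.

Lemma face_edges_at_vertex t g y1 y2 y :
  E y1 != E y2 -> at_vertex (E y1) t -> at_vertex (E y2) t -> at_vertex (E y) t ->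
  edge_on_face (E y1) (Fc g) -> edge_on_face (E y2) (Fc g) -> edge_on_face (E y) (Fc g) ->
  E y = E y1 \/ E y = E y2.
Proof.
have not_all3 : edge_on_face (E t) (Fc g) -> edge_on_face (E (s t)) (Fc g) ->
    edge_on_face (E (s (s t))) (Fc g) -> False.
  have n01 := face_s_neq t; have n12 := face_s_neq (s t); have n20 := face_ss_neq t.
  rewrite !edge_on_faceE s3 => /orP [] /eqP -> /orP [] /eqP E2 /orP [] /eqP E3;
    by rewrite ?E2 ?E3 ?eqxx in n01 n12 n20.
rewrite !at_vertexE => n12 A1 A2 A3; move: A1 A2 A3 n12.
move=> /or3P [] /eqP -> /or3P [] /eqP -> /or3P [] /eqP -> n12 h1 h2 h3;
  rewrite ?eqxx //= in n12; try by [left | right].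
all: by exfalso; apply: not_all3; rewrite ?h1 ?h2 ?h3.
Qed.

Section FaceCycle.
Variables (k : nat) (g : D) (u y : 'I_k -> D).
Hypothesis k_gt2 : 2 < k.
Hypothesis u_inj : forall j l, fconnect s (u j) (u l) -> j = l.
Hypothesis cyc : forall j,
  [/\ at_vertex (E (y j)) (u j), at_vertex (E (y j)) (u (ordS j)) & edge_on_face (E (y j)) (Fc g)].

Lemma cycle_vertices_apart j l : j != l -> ~~ fconnect s (u j) (u l).
Proof. by apply: contra => /u_inj ->. Qed.

Lemma ord_pred_neq (j : 'I_k) : ord_pred j != j.
Proof. by have := ordS_neq (ord_pred j) (ltnW k_gt2); rewrite ord_predK eq_sym. Qed.

Lemma cycle_edges_at j z : z \in Fc g -> fconnect s (u j) z ->
  E z = E (y j) \/ E z = E (y (ord_pred j)).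
Proof.
move=> zg jz; have [a1 a2 g1] := cyc j.
have [b1 b2 g2] := cyc (ord_pred j); rewrite ord_predK in b2.
have ny : E (y j) != E (y (ord_pred j)).
  apply/eqP => Eyy; rewrite -Eyy in b1.
  have n1 : j != ordS j by rewrite eq_sym ordS_neq // ltnW.
  have n2 : ordS j != ord_pred j by rewrite eq_sym ord_pred_neq_ordS.
  have n3 : j != ord_pred j by rewrite eq_sym ord_pred_neq.
  have := edge_two_endpoints a1 a2 b1.
  by rewrite !(negbTE (cycle_vertices_apart _)).
have zj : at_vertex (E z) (u j) by apply/at_vertexP; exists z; rewrite ?mem_edge ?eqxx.
have zg' : edge_on_face (E z) (Fc g) by apply/set0Pn; exists z; rewrite in_setI mem_edge eqxx.
exact: face_edges_at_vertex ny a1 b2 zj g1 g2 zg'.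
Qed.

Lemma cycle_step j z : z \in Fc g -> fconnect s (u j) z -> exists l, fconnect s (u l) (ph z).
Proof.
move=> zg jz.
have other l : at_vertex (E z) (u l) -> l != j -> fconnect s (u l) (ph z).
  move=> zl nlj; have nz : ~~ fconnect s (u l) z.
    apply: contra (cycle_vertices_apart nlj) => lz.
    by apply: connect_trans lz _; rewrite fconnect_s_sym.
  exact: connect_trans (other_endpoint zl nz) (fconnect1 _ _).
case: (cycle_edges_at zg jz) => Ez.
  by exists (ordS j); apply: other; [rewrite Ez; case: (cyc j) | rewrite ordS_neq // ltnW].
exists (ord_pred j); apply: other (ord_pred_neq j).
by rewrite Ez; case: (cyc (ord_pred j)).
Qed.

Lemma face_cycle_vertices x : x \in Fc g -> exists j, fconnect s (u j) x.
Proof.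
pose j0 : 'I_k := Ordinal (ltnW (ltnW k_gt2)).
have [x0 x0g u0x0] : exists2 x0, x0 \in Fc g & fconnect s (u j0) x0.
  by apply/vertex_on_faceP; case: (cyc j0) => a1 _ g1; exact: edge_at_face a1 g1.
move=> xg; have gx0 : Fc g = Fc x0 by apply/eqP; rewrite -mem_face.
have : (x \in Fc g) && [exists j, fconnect s (u j) x].
  apply: (fconnect_stable (P := fun z => (z \in Fc g) && [exists j, fconnect s (u j) z])
            (f := ph) (x := x0)).
  - by rewrite x0g; apply/existsP; exists j0.
  - move=> z /andP [zg /existsP [j jz]]; have [l lz] := cycle_step zg jz.
    by rewrite /= mem_face face_phi -mem_face zg; apply/existsP; exists l.
  by move: xg; rewrite gx0 inE.
by case/andP => _ /existsP.
Qed.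

End FaceCycle.

Lemma prismatic_of_faces k (p y : 'I_k -> D) :
  injective (fun j => Fc (p j)) ->
  (forall j, edge_on_face (E (y j)) (Fc (p j)) /\ edge_on_face (E (y (ordS j))) (Fc (p j))) ->
  (forall j l t, j != l ->
     [&& vertex_on_face s t (Fc (p (ord_pred j))), vertex_on_face s t (Fc (p j)),
         vertex_on_face s t (Fc (p (ord_pred l))) & vertex_on_face s t (Fc (p l))] -> False) ->
  prismatic a s (fun j => E (y j)) (fun j => Fc (p j)).
Proof.
move=> p_inj adj two_edges.
have faces j t : at_vertex (E (y j)) t ->
    vertex_on_face s t (Fc (p (ord_pred j))) && vertex_on_face s t (Fc (p j)).
  have [yp _] := adj j; have [_] := adj (ord_pred j); rewrite ord_predK => yp'.
  by move=> yt; rewrite (edge_at_face yt yp) (edge_at_face yt yp').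
have apart j l t : j != l -> at_vertex (E (y j)) t -> at_vertex (E (y l)) t -> False.
  move=> njl /faces /andP [v1 v2] /faces /andP [v3 v4].
  by apply: (two_edges j l t njl); apply/and4P.
have at_self x : at_vertex (E x) x by apply/at_vertexP; exists x; rewrite ?mem_edge ?eqxx.
split; first split => //.
- by move=> j; exists (y j).
- by move=> j; exists (p j).
- move=> j l Ejl; apply/eqP/negPn/negP => njl.
  by apply: (apart j l (y j) njl); rewrite -?Ejl.
move=> j l x x' xj x'l xx'.
case: (eqVneq j l) x'l => [<- x'j | njl x'l]; first exact: edge_darts_apart xj x'j xx'.
exfalso; apply: (apart j l x njl); apply/at_vertexP; [by exists x | by exists x'].
Qed.

(* No prismatic 3-circuit: three pairwise adjacent faces share a vertex. *)
Lemma three_adjacent_faces_meet p0 p1 p2 y0 y1 y2 :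
  Fc p0 != Fc p1 -> Fc p1 != Fc p2 -> Fc p0 != Fc p2 ->
  edge_on_face (E y0) (Fc p2) -> edge_on_face (E y0) (Fc p0) ->
  edge_on_face (E y1) (Fc p0) -> edge_on_face (E y1) (Fc p1) ->
  edge_on_face (E y2) (Fc p1) -> edge_on_face (E y2) (Fc p2) ->
  exists t, [&& vertex_on_face s t (Fc p0), vertex_on_face s t (Fc p1) &
                vertex_on_face s t (Fc p2)].
Proof.
move=> n01 n12 n02 h02 h00 h10 h11 h21 h22.
set meet := fun t => [&& vertex_on_face s t (Fc p0), vertex_on_face s t (Fc p1) &
                         vertex_on_face s t (Fc p2)].
case: (boolP [exists t, meet t]) => [/existsP [t mt]|/existsPn none]; first by exists t.
exfalso; apply: (rah_no_prism3 rah (e := fun j : 'I_3 => E (nth y0 [:: y0; y1; y2] j))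
                                 (F := fun j : 'I_3 => Fc (nth p0 [:: p0; p1; p2] j))).
apply: prismatic_of_faces.
- move=> j l Ejl; apply: val_inj; move: Ejl.
  case: j => [[|[|[|?]]] ?] //; case: l => [[|[|[|?]]] ?] //= /eqP;
    by rewrite ?(negbTE n01) ?(negbTE n12) ?(negbTE n02) // eq_sym
      ?(negbTE n01) ?(negbTE n12) ?(negbTE n02).
- by case=> [[|[|[|?]]] ?] //=; split.
move=> j l t; have := none t; rewrite /meet.
by case: j => [[|[|[|?]]] ?] //; case: l => [[|[|[|?]]] ?] //= nt _;
  case/and4P => v1 v2 v3 v4; move: nt; rewrite ?v1 ?v2 ?v3 ?v4.
Qed.

(* No prismatic 4-circuit: among four cyclically adjacent distinct faces,
   three consecutive ones share a vertex. *)
Lemma four_adjacent_faces_meet p0 p1 p2 p3 y0 y1 y2 y3 :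
  Fc p0 != Fc p1 -> Fc p0 != Fc p2 -> Fc p0 != Fc p3 ->
  Fc p1 != Fc p2 -> Fc p1 != Fc p3 -> Fc p2 != Fc p3 ->
  edge_on_face (E y0) (Fc p3) -> edge_on_face (E y0) (Fc p0) ->
  edge_on_face (E y1) (Fc p0) -> edge_on_face (E y1) (Fc p1) ->
  edge_on_face (E y2) (Fc p1) -> edge_on_face (E y2) (Fc p2) ->
  edge_on_face (E y3) (Fc p2) -> edge_on_face (E y3) (Fc p3) ->
  exists t, let v := fun p => vertex_on_face s t (Fc p) in
    [|| [&& v p0, v p1 & v p2], [&& v p1, v p2 & v p3],
        [&& v p2, v p3 & v p0] | [&& v p3, v p0 & v p1]].
Proof.
move=> n01 n02 n03 n12 n13 n23 h03 h00 h10 h11 h21 h22 h32 h33.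
set meet := fun t => let v := fun p => vertex_on_face s t (Fc p) in
    [|| [&& v p0, v p1 & v p2], [&& v p1, v p2 & v p3],
        [&& v p2, v p3 & v p0] | [&& v p3, v p0 & v p1]].
case: (boolP [exists t, meet t]) => [/existsP [t mt]|/existsPn none]; first by exists t.
exfalso; apply: (rah_no_prism4 rah (e := fun j : 'I_4 => E (nth y0 [:: y0; y1; y2; y3] j))
                                 (F := fun j : 'I_4 => Fc (nth p0 [:: p0; p1; p2; p3] j))).
apply: prismatic_of_faces.
- move=> j l Ejl; apply: val_inj; move: Ejl.
  case: j => [[|[|[|[|?]]]] ?] //; case: l => [[|[|[|[|?]]]] ?] //= /eqP;
    by rewrite ?(negbTE n01) ?(negbTE n02) ?(negbTE n03) ?(negbTE n12) ?(negbTE n13)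
      ?(negbTE n23) // eq_sym ?(negbTE n01) ?(negbTE n02) ?(negbTE n03) ?(negbTE n12)
      ?(negbTE n13) ?(negbTE n23).
- by case=> [[|[|[|[|?]]]] ?] //=; split.
move=> j l t; have := none t; rewrite /meet /=.
by case: j => [[|[|[|[|?]]]] ?] //; case: l => [[|[|[|[|?]]]] ?] //= nt _;
  case/and4P => v1 v2 v3 v4; move: nt; rewrite ?v1 ?v2 ?v3 ?v4 ?orbT.
Qed.

Lemma ordS5 (j : 'I_5) : ordS (ordS (ordS (ordS (ordS j)))) = j.
Proof. by apply: val_inj; case: j => [[|[|[|[|[|?]]]]] ?]. Qed.

Lemma ordS5_neq (j : 'I_5) :
  [/\ ordS j != j, ordS (ordS j) != j, ordS (ordS (ordS j)) != j
    & ordS (ordS (ordS (ordS j))) != j].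
Proof. by case: j => [[|[|[|[|[|?]]]]] ?]. Qed.

Lemma ord5_cases (i j : 'I_5) :
  j = i \/ j = ordS i \/ j = ordS (ordS i) \/ j = ordS (ordS (ordS i))
    \/ j = ordS (ordS (ordS (ordS i))).
Proof.
case: i => [[|[|[|[|[|?]]]]] ?] //; case: j => [[|[|[|[|[|?]]]]] ?] //;
  do ?[by left; apply: val_inj | right]; by apply: val_inj.
Qed.

Definition around5 (T : Type) (i : 'I_5) (v0 v1 v2 v3 v4 : T) (j : 'I_5) : T :=
  if j == i then v0 else if j == ordS i then v1 else if j == ordS (ordS i) then v2
  else if j == ordS (ordS (ordS i)) then v3 else v4.

Lemma around5E (T : Type) (i : 'I_5) (v0 v1 v2 v3 v4 : T) :
  let v := around5 i v0 v1 v2 v3 v4 in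
  [/\ v i = v0, v (ordS i) = v1, v (ordS (ordS i)) = v2, v (ordS (ordS (ordS i))) = v3
    & v (ordS (ordS (ordS (ordS i)))) = v4].
Proof. by rewrite /around5; case: i => [[|[|[|[|[|?]]]]] ?]. Qed.

Lemma ord5_two_apart (j k l : 'I_5) : j != k -> k != l -> j != l ->
  [|| k == ordS (ordS j), j == ordS (ordS k), l == ordS (ordS j),
      j == ordS (ordS l), l == ordS (ordS k) | k == ordS (ordS l)].
Proof.
by case: j => [[|[|[|[|[|?]]]]] ?] //; case: k => [[|[|[|[|[|?]]]]] ?] //;
  case: l => [[|[|[|[|[|?]]]]] ?].
Qed.

Section FiveCircuit.
Variables (e Fa : 'I_5 -> {set D}).
Hypothesis circ : circuit a s e Fa.
Hypothesis ends_apart :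
  forall (i j : 'I_5) (x y : D), x \in e i -> y \in e j -> fconnect s x y -> x = y.

Lemma face_dart_ex j : exists z, Fa j == Fc z.
Proof. by have [z ->] := circuit_face circ j; exists z. Qed.

Definition face_dart j : D := xchoose (face_dart_ex j).

Lemma face_dartE j : Fa j = Fc (face_dart j).
Proof. exact/eqP/(xchooseP (face_dart_ex j)). Qed.

Lemma circuit_faces_neq j k : j != k -> Fa j != Fa k.
Proof. by apply: contra => /eqP /(circuit_face_inj circ) ->. Qed.

Lemma crossed_at_vertex_unique j k t : at_vertex (e j) t -> at_vertex (e k) t -> j = k.
Proof.
case/at_vertexP => x xj tx; case/at_vertexP => y yk ty.
have xy : fconnect s x y by apply: connect_trans ty; rewrite fconnect_s_sym.
have exy := ends_apart xj yk xy; subst y.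
apply: (crossed_inj circ).
have [w Ew] := crossed_edge circ j; have [w' Ew'] := crossed_edge circ k.
by rewrite Ew Ew' in xj yk *; rewrite -(edge_mem xj) -(edge_mem yk).
Qed.

Lemma vertex_on_consecutive_faces j t :
  vertex_on_face s t (Fa j) -> vertex_on_face s t (Fa (ordS j)) -> at_vertex (e (ordS j)) t.
Proof.
have npq : Fa j != Fa (ordS j).
  by apply: circuit_faces_neq; rewrite eq_sym; case: (ordS5_neq j).
have [w Ew] := crossed_edge circ (ordS j).
have h1 := next_crossed_on_face circ j; have h2 := crossed_on_face circ (ordS j).
rewrite Ew in h1 h2 *; rewrite !face_dartE in npq h1 h2 * => vj vj1.
exact: shared_edge_at npq vj vj1 h1 h2.
Qed.

Lemma no_vertex_on_three_consecutive_faces j t :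
  vertex_on_face s t (Fa j) -> vertex_on_face s t (Fa (ordS j)) ->
  vertex_on_face s t (Fa (ordS (ordS j))) -> False.
Proof.
move=> v0 v1 v2.
have := crossed_at_vertex_unique (vertex_on_consecutive_faces v0 v1)
  (vertex_on_consecutive_faces v1 v2).
by case: (ordS5_neq (ordS j)) => /eqP n _ _ _ E; apply: n; exact: esym E.
Qed.

(* F_j and F_(j+2) share no edge: otherwise F_j, F_(j+1), F_(j+2) would be
   three pairwise adjacent faces, hence meet at a vertex *)
Lemma no_edge_on_faces_two_apart j y :
  edge_on_face (E y) (Fa j) -> edge_on_face (E y) (Fa (ordS (ordS j))) -> False.
Proof.
case: (ordS5_neq j) => n1 n2 _ _; case: (ordS5_neq (ordS j)) => n1' _ _ _.
have d01 : Fa j != Fa (ordS j) by rewrite circuit_faces_neq // eq_sym.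
have d12 : Fa (ordS j) != Fa (ordS (ordS j)) by rewrite circuit_faces_neq // eq_sym.
have d02 : Fa j != Fa (ordS (ordS j)) by rewrite circuit_faces_neq // eq_sym.
have [w1 Ew1] := crossed_edge circ (ordS j); have [w2 Ew2] := crossed_edge circ (ordS (ordS j)).
have a1 := next_crossed_on_face circ j; have b1 := crossed_on_face circ (ordS j).
have a2 := next_crossed_on_face circ (ordS j); have b2 := crossed_on_face circ (ordS (ordS j)).
rewrite Ew1 in a1 b1; rewrite Ew2 in a2 b2.
rewrite !face_dartE in d01 d12 d02 a1 b1 a2 b2 * => h0 h2.
have [t /and3P [v0 v1 v2]] := three_adjacent_faces_meet d01 d12 d02 h2 h0 a1 b1 a2 b2.
by apply: (@no_vertex_on_three_consecutive_faces j t); rewrite !face_dartE.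
Qed.

Lemma no_vertex_on_faces_two_apart j t :
  vertex_on_face s t (Fa j) -> vertex_on_face s t (Fa (ordS (ordS j))) -> False.
Proof.
have npq : Fa j != Fa (ordS (ordS j)).
  by rewrite circuit_faces_neq // eq_sym; case: (ordS5_neq j).
rewrite !face_dartE in npq * => vj vk.
have [y [_ yp yq]] := common_edge_at npq vj vk.
by apply: (@no_edge_on_faces_two_apart j y); rewrite face_dartE.
Qed.

Lemma no_vertex_on_three_circuit_faces j k l t : j != k -> k != l -> j != l ->
  vertex_on_face s t (Fa j) -> vertex_on_face s t (Fa k) -> vertex_on_face s t (Fa l) -> False.
Proof.
move=> njk nkl njl vj vk vl.
have far := no_vertex_on_faces_two_apart.
case/or4P: (ord5_two_apart njk nkl njl) => [|||/orP [|/orP []]] /eqP E; subst;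
  first [exact: far vj vk | exact: far vk vj | exact: far vj vl | exact: far vl vj
        | exact: far vk vl | exact: far vl vk].
Qed.

Lemma trivial_of_face_cycle g (u y : 'I_5 -> D) :
  (forall j, at_vertex (e j) (u j)) ->
  (forall j, [/\ at_vertex (E (y j)) (u j), at_vertex (E (y j)) (u (ordS j))
               & edge_on_face (E (y j)) (Fc g)]) ->
  trivial_circuit a s e.
Proof.
move=> ue cyc.
have u_inj j l : fconnect s (u j) (u l) -> j = l.
  by move=> jl; apply: (crossed_at_vertex_unique _ (ue l)); rewrite -(at_vertex_conn _ jl).
have gverts := face_cycle_vertices (isT : 2 < 5) u_inj cyc.
have ug j : vertex_on_face s (u j) (Fc g).
  by case: (cyc j) => uj _ gj; exact: edge_at_face uj gj.
exists (Fc g); split; first by exists g.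
- apply/eqP; rewrite eqn_leq (rah_face5 rah g) andbT.
  have V_inj : {in Fc g &, injective V}.
    move=> x x' xg x'g /vertexP xx'; apply: (rah_face_simple rah); last by rewrite inE.
    by move: xg x'g; rewrite !mem_face => /eqP <- /eqP ->.
  rewrite -(card_in_imset V_inj) -[5]card_ord.
  apply: leq_trans (leq_imset_card (fun j => V (u j)) _).
  apply/subset_leq_card/subsetP => _ /imsetP [x xg ->].
  have [j jx] := gverts x xg; apply/imsetP; exists j => //.
  exact/esym/vertexP.
move=> j; apply/eqP/cards1P.
have [y0 y0j jy0] := at_vertexP _ _ (ue j).
have [w Ew] := crossed_edge circ j.
have ej : e j = E y0 by rewrite Ew in y0j *; rewrite (edge_mem y0j).
exists y0; apply/setP => x; rewrite !inE ej mem_edge.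
case: (eqVneq x y0) => [->|nxy] /=; first by rewrite -(vertex_on_face_conn _ jy0) ug.
case: (eqVneq x (a y0)) => [->|//] /=.
apply/negbTE/negP => /vertex_on_faceP [x' x'g ax'].
have [l lx'] := gverts x' x'g.
have la : fconnect s (u l) (a y0) by apply: connect_trans lx' _; rewrite fconnect_s_sym.
have el : at_vertex (e l) (a y0) by rewrite -(at_vertex_conn _ la).
have ej' : at_vertex (e j) (a y0).
  by apply/at_vertexP; exists (a y0); rewrite ?ej ?mem_edge ?eqxx ?orbT.
have lj := crossed_at_vertex_unique el ej'; subst l.
have : fconnect s y0 (a y0) by apply: connect_trans la; rewrite fconnect_s_sym.
by rewrite (negbTE (edge_no_loop y0)).
Qed.

Lemma face_corner m l t g x : Fa m != Fc g -> edge_on_face (e l) (Fa m) ->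
  at_vertex (e l) t -> at_vertex (E x) t -> edge_on_face (E x) (Fc g) ->
  exists y, [/\ at_vertex (E y) t, edge_on_face (E y) (Fa m) & edge_on_face (E y) (Fc g)].
Proof.
have [w ->] := crossed_edge circ l; rewrite face_dartE => mg wm wt xt xg.
exact: common_edge_at mg (edge_at_face wt wm) (edge_at_face xt xg).
Qed.

Lemma edge_between_at m g y t : Fa m != Fc g ->
  vertex_on_face s t (Fa m) -> vertex_on_face s t (Fc g) ->
  edge_on_face (E y) (Fa m) -> edge_on_face (E y) (Fc g) -> at_vertex (E y) t.
Proof. rewrite face_dartE; exact: shared_edge_at. Qed.

Lemma flats_third_face i x0 x1 z :
  edge_on_face (E x0) (Fa i) -> E x0 != e (ordS i) -> fconnect s (a x0) z ->
  edge_on_face (E x1) (Fa (ordS i)) -> E x1 != e (ordS i) -> fconnect s x1 z ->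
  z \in e (ordS i) ->
  exists g, [/\ edge_on_face (E x0) (Fc g), edge_on_face (E x1) (Fc g)
              & forall j, Fa j != Fc g].
Proof.
move=> x0B nx0 x0z x1C nx1 x1z ze.
have nBC : Fa i != Fa (ordS i) by rewrite circuit_faces_neq // eq_sym; case: (ordS5_neq i).
have [w Ew] := crossed_edge circ (ordS i).
have eB := next_crossed_on_face circ i; have eC := crossed_on_face circ (ordS i).
have ez : at_vertex (E w) z by rewrite -Ew; apply/at_vertexP; exists z.
rewrite Ew in eB eC nx0 nx1; move: x0B x1C nBC eB eC; rewrite !face_dartE => x0B x1C nBC eB eC.
have zB := edge_at_face ez eB; have zC := edge_at_face ez eC.
have [g [zg gB gC]] := third_face nBC zB zC.
have x0at : at_vertex (E x0) z.
  by apply/at_vertexP; exists (a x0); rewrite ?mem_edge ?eqxx ?orbT // fconnect_s_sym.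
have x1at : at_vertex (E x1) z.
  by apply/at_vertexP; exists x1; rewrite ?mem_edge ?eqxx // fconnect_s_sym.
have x0g : edge_on_face (E x0) (Fc g).
  apply: (edge_on_third_face nBC _ _ zB zC zg x0at x0B); rewrite 1?eq_sym //.
  by apply: contra nx0 => x0C; rewrite (faces_share_one_edge nBC x0B x0C eB eC).
have x1g : edge_on_face (E x1) (Fc g).
  rewrite eq_sym in nBC.
  apply: (edge_on_third_face nBC _ _ zC zB zg x1at x1C); rewrite 1?eq_sym //.
  by apply: contra nx1 => x1B; rewrite (faces_share_one_edge nBC x1C x1B eC eB).
exists g; split => // j.
have far := no_edge_on_faces_two_apart.
case: (ord5_cases i j) => [|[|[|[|]]]] ->; rewrite ?face_dartE 1?eq_sym //;
  apply/eqP => Ej.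
- by apply: (far i x0); rewrite face_dartE -?Ej.
- by apply: (far (ordS (ordS (ordS i))) x0); rewrite ?ordS5 face_dartE -?Ej.
by apply: (far (ordS (ordS (ordS (ordS i)))) x1); rewrite ?ordS5 face_dartE -?Ej.
Qed.

(* Since there
   are no prismatic 4-circuits, g is also adjacent to F_(j+1), with corners
   t1 on F_(j+2), g, F_(j+1) and t2 on g, F_j, F_(j+1). *)
Lemma far_corners j g yf yg :
  (forall l, Fa l != Fc g) ->
  edge_on_face (E yf) (Fa (ordS (ordS j))) -> edge_on_face (E yf) (Fc g) ->
  edge_on_face (E yg) (Fa j) -> edge_on_face (E yg) (Fc g) ->
  exists t1 t2 yh,
  [/\ [/\ vertex_on_face s t1 (Fa (ordS (ordS j))), vertex_on_face s t1 (Fc g)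
        & vertex_on_face s t1 (Fa (ordS j))],
      [/\ vertex_on_face s t2 (Fc g), vertex_on_face s t2 (Fa j)
        & vertex_on_face s t2 (Fa (ordS j))] &
      edge_on_face (E yh) (Fc g) /\ edge_on_face (E yh) (Fa (ordS j))].
Proof.
move=> gcirc fA fG gD gG.
case: (ordS5_neq j) => n1 n2 _ _; case: (ordS5_neq (ordS j)) => n1' _ _ _.
have nAD : Fa (ordS (ordS j)) != Fa j by rewrite circuit_faces_neq.
have nAE : Fa (ordS (ordS j)) != Fa (ordS j) by rewrite circuit_faces_neq.
have nDE : Fa j != Fa (ordS j) by rewrite circuit_faces_neq // eq_sym.
have nAG := gcirc (ordS (ordS j)); have nDG := gcirc j; have nEG := gcirc (ordS j).
have nGD : Fc g != Fa j by rewrite eq_sym.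
have nGE : Fc g != Fa (ordS j) by rewrite eq_sym.
have [w3 Ew3] := crossed_edge circ (ordS j); have [w4 Ew4] := crossed_edge circ (ordS (ordS j)).
have e3D := next_crossed_on_face circ j; have e3E := crossed_on_face circ (ordS j).
have e4E := next_crossed_on_face circ (ordS j).
have e4A := crossed_on_face circ (ordS (ordS j)).
rewrite Ew3 in e3D e3E; rewrite Ew4 in e4E e4A.
move: fA gD e3D e3E e4E e4A nAD nAE nDE nAG nDG nEG nGD nGE.
rewrite !face_dartE => fA gD e3D e3E e4E e4A nAD nAE nDE nAG nDG nEG nGD nGE.
have [t /= Ht] := four_adjacent_faces_meet nAG nAD nAE nGD nGE nDE e4E e4A fA fG gG gD e3D e3E.
case/or4P: Ht => /and3P [h1 h2 h3].
- by exfalso; apply: (@no_vertex_on_faces_two_apart j t); rewrite face_dartE.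
- have [yh [_ hG hE]] := common_edge_at nGE h1 h3.
  have [t1 /and3P [k1 k2 k3]] := three_adjacent_faces_meet nAG nGE nAE e4E e4A fA fG hG hE.
  by exists t1, t, yh.
- by exfalso; apply: (@no_vertex_on_three_circuit_faces j (ordS j) (ordS (ordS j)) t);
    rewrite ?face_dartE // eq_sym.
have [yh [_ hG hE]] := common_edge_at nGE h3 h1.
have [t2 /and3P [k1 k2 k3]] := three_adjacent_faces_meet nGD nDE nGE hE hG gG gD e3D e3E.
by exists t, t2, yh.
Qed.

(* Two flats x0 (in F_i, from e_i to e_(i+1)) and x1 (in F_(i+1), from
   e_(i+1) to e_(i+2)) sharing their endpoint z on e_(i+1) force the circuit
   to be trivial: the face g through both flats is a pentagon. *)
Lemma trivial_of_adjacent_flats i x0 y0 z x1 z1 :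
  edge_on_face (E x0) (Fa i) -> E x0 != e (ordS i) -> y0 \in e i -> fconnect s x0 y0 ->
  z \in e (ordS i) -> fconnect s (a x0) z ->
  edge_on_face (E x1) (Fa (ordS i)) -> E x1 != e (ordS i) -> fconnect s x1 z ->
  z1 \in e (ordS (ordS i)) -> fconnect s (a x1) z1 ->
  trivial_circuit a s e.
Proof.
move=> x0B nx0 y0e x0y0 ze x0z x1C nx1 x1z z1e x1z1.
have [g [x0g x1g gcirc]] := flats_third_face x0B nx0 x0z x1C nx1 x1z ze.
pose i2 := ordS (ordS i); pose i4 := ordS (ordS i2).
have ends y x t : y \in E x -> fconnect s t y -> at_vertex (E x) t.
  by move=> yx ty; apply/at_vertexP; exists y.
have x0_x0 : at_vertex (E x0) x0 by apply: (ends x0); rewrite ?mem_edge ?eqxx.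
have x0_z : at_vertex (E x0) z.
  by apply: (ends (a x0)); rewrite ?mem_edge ?eqxx ?orbT // fconnect_s_sym.
have x1_z : at_vertex (E x1) z by apply: (ends x1); rewrite ?mem_edge ?eqxx // fconnect_s_sym.
have x1_w : at_vertex (E x1) (a x1) by apply: (ends (a x1)); rewrite ?mem_edge ?eqxx ?orbT.
have ei_x0 : at_vertex (e i) x0 by apply/at_vertexP; exists y0.
have ei1_z : at_vertex (e (ordS i)) z by apply/at_vertexP; exists z.
have ei2_w : at_vertex (e i2) (a x1) by apply/at_vertexP; exists z1.
have eA : edge_on_face (e i) (Fa i4) by rewrite -{1}(ordS5 i) next_crossed_on_face.
have [yf [yf_x0 yfA yfG]] := face_corner (gcirc i4) eA ei_x0 x0_x0 x0g.
have [yg [yg_w ygD ygG]] :=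
  face_corner (gcirc i2) (crossed_on_face circ i2) ei2_w x1_w x1g.
have [t1 [t2 [yh [[t1A t1G t1E] [t2G t2D t2E] [yhG yhE]]]]] :=
  far_corners gcirc yfA yfG ygD ygG.
have on_g := edge_between_at (gcirc _).
(* the pentagon x0, z, a x1, t2, t1 on the boundary of g *)
apply: (trivial_of_face_cycle (g := g) (u := around5 i x0 z (a x1) t2 t1)
                                  (y := around5 i x0 x1 yg yh yf)).
  case: (around5E i x0 z (a x1) t2 t1) => u0 u1 u2 u3 u4.
  move=> j; case: (ord5_cases i j) => [|[|[|[|]]]] ->; rewrite ?u0 ?u1 ?u2 ?u3 ?u4 //.
    exact: vertex_on_consecutive_faces t2D t2E.
  exact: vertex_on_consecutive_faces t1E t1A.
case: (around5E i x0 z (a x1) t2 t1) => u0 u1 u2 u3 u4.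
case: (around5E i x0 x1 yg yh yf) => y0' y1' y2' y3' y4'.
move=> j; case: (ord5_cases i j) => [|[|[|[|]]]] ->;
  rewrite ?ordS5 ?u0 ?u1 ?u2 ?u3 ?u4 ?y0' ?y1' ?y2' ?y3' ?y4'; split => //.
- exact: on_g t2D t2G ygD ygG.
- exact: on_g t2E t2G yhE yhG.
- exact: on_g t1E t1G yhE yhG.
exact: on_g t1A t1G yfA yfG.
Qed.


Lemma flat_dart_uncrossed j x y :
  fconnect s x y -> y \in e j -> E x != e j -> forall k, x \notin e k.
Proof.
move=> xy ye nxe k; apply/negP => xe; have exy := ends_apart xe ye xy; subst y.
have [w Ew] := crossed_edge circ j.
by move: nxe; rewrite Ew in ye *; rewrite (edge_mem ye) eqxx.
Qed.

(* Flats in F_i and F_(i+1) on the same side of the circuit end at the same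
   endpoint of e_(i+1), hence make the circuit trivial. *)
Lemma adjacent_flats_same_side i d d' :
  flat a s e Fa i d -> flat a s e Fa (ordS i) d' -> same_side a s e d d' ->
  trivial_circuit a s e.
Proof.
case=> _ x0B nx0i nx0 [x0 [y0 [z [Ed y0e ze x0y0 x0z]]]].
case=> _ x1C nx1 _ [x1 [y1 [z1 [Ed' y1e z1e x1y1 x1z1]]]] side; subst d d'.
have [tau [tau_s tau_a tau_flip]] := side_function (isT : 1 < 5) circ.
have tau_v x y : fconnect s x y -> tau x = tau y.
  by apply: connect_invariant => u v /eqP <-; rewrite tau_s.
have [p [q [pd qd' tau_pq]]] := same_side_function tau_s tau_a side.
have tau_p : tau p = tau z.
  rewrite -(tau_v _ _ x0z); move: pd; rewrite mem_edge => /orP [] /eqP -> //.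
  by rewrite tau_a //; apply: flat_dart_uncrossed x0y0 y0e nx0i.
have tau_q : tau q = tau y1.
  rewrite -(tau_v _ _ x1y1); move: qd'; rewrite mem_edge => /orP [] /eqP -> //.
  by rewrite tau_a //; apply: flat_dart_uncrossed x1y1 y1e nx1.
have zy1 : z = y1.
  have [w Ew] := crossed_edge circ (ordS i).
  have := tau_flip _ _ ze; move: ze y1e (etrans (esym tau_p) (etrans tau_pq tau_q)).
  by rewrite Ew !mem_edge => /orP [] /eqP -> /orP [] /eqP -> // ->; rewrite ?aK eqxx.
subst y1.
exact: trivial_of_adjacent_flats x0B nx0 y0e x0y0 ze x0z x1C nx1 x1y1 z1e x1z1.
Qed.

End FiveCircuit.
End Polyhedron.

Theorem mainTheorem15 (D : finType) (a s : D -> D) (e F : 'I_5 -> {set D}) :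
  rah_polyhedron a s ->
  prismatic a s e F ->
  ~ trivial_circuit a s e ->
  ~ (exists (i : 'I_5) (d d' : {set D}),
       [/\ flat a s e F i d, flat a s e F (ordS i) d' & same_side a s e d d']).
Proof.
move=> rah [circ ends_apart] nontrivial [i [d [d' [flat_d flat_d' side]]]].
exact/nontrivial/(adjacent_flats_same_side rah circ ends_apart flat_d flat_d' side).
Qed.
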